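(* Assume all struts are straight, and let $n\ge1$, $k\ge0$ be integers with $k\ge n-1$. If $\psi\in M_n$ satisfies $b(\Sigma,\psi)=0$ for all $\Sigma\in V_k$, then $\psi=0$; i.e. $\operatorname{Ker}B_h^T=\{0\}$.
   Context: Network: a stent is modelled by a finite connected graph with vertices $j=1,\dots,n_{\mathcal V}$ and oriented edges $i=1,\dots,n_{\mathcal E}$. $J_j^-$ ($J_j^+$) is the set of edges leaving (entering) vertex $j$. Edge $i$ is a straight segment of length $\ell^i>0$, parametrized as $\Phi^i(s)=\Phi^i(0)+s\,t^i$, $s\in[0,\ell^i]$, with constant unit tangent $t^i$; $s=0$ at the vertex it leaves, $s=\ell^i$ at the vertex it enters. Matrices: $A^+_{I}\in\mathbb{R}^{3n_{\mathcal V}\times 3n_{\mathcal E}}$ has $3\times3$ block $I_3$ in block row $j$, block column $i$ if $i\in J_j^+$ and $0$ otherwise; $A^-_I$ likewise with $J_j^-$. Notation: $P_m(\mathcal N)$ denotes functions that on each edge $[0,\ell^i]$ are real polynomials of degree at most $m$ (no continuity at vertices); $\int_{\mathcal N}v=\sum_i\int_0^{\ell^i}v^i\,ds$. $V_k=P_k(\mathcal N)^3\times P_k(\mathcal N)^3\times(\mathbb{R}^{3n_{\mathcal E}})^4\times\mathbb{R}^3\times\mathbb{R}^3$ with elements $\Sigma=(q,p,P_+,P_-,Q_+,Q_-,\alpha,\beta)$, $M_n=P_n(\mathcal N)^3\times P_n(\mathcal N)^3\times\mathbb{R}^{3n_{\mathcal V}}\times\mathbb{R}^{3n_{\mathcal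 V}}$ with elements $\psi=(v,w,V,W)$. $b(\Sigma,\psi)=\sum_i\int_0^{\ell^i}\big(-p^i\cdot(\partial_sv^i+t^i\times w^i)-q^i\cdot\partial_sw^i\big)ds+\sum_i\big(P^i_+\cdot v^i(\ell^i)-P^i_-\cdot v^i(0)\big)+\sum_i\big(Q^i_+\cdot w^i(\ell^i)-Q^i_-\cdot w^i(0)\big)-(A^+_IP_+-A^-_IP_-)\cdot V-(A^+_IQ_+-A^-_IQ_-)\cdot W+\alpha\cdot\int_{\mathcal N}v+\beta\cdot\int_{\mathcal N}w$. *)

From HB Require Import structures.
From mathcomp Require Import all_boot all_order all_algebra.
From mathcomp Require Import all_classical all_reals all_analysis.

Set Implicit Arguments.
Unset Strict Implicit.
Unset Printing Implicit Defensive.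
Import Order.TTheory GRing.Theory Num.Theory.
Import numFieldNormedType.Exports.
Local Open Scope ring_scope.

Section StentDefs.
Variable R : realType.

(* vectors of R^3 are row vectors 'rV[R]_3 ;
   R^3-valued polynomials (one polynomial per component) are 'rV[{poly R}]_3 *)
Definition e0 : 'I_3 := inord 0.
Definition e1 : 'I_3 := inord 1.
Definition e2 : 'I_3 := inord 2.

Definition dot3 (a b : 'rV[R]_3) : R := \sum_(c < 3) a ord0 c * b ord0 c.

Definition cross3 (a b : 'rV[R]_3) : 'rV[R]_3 :=
  \row_(k < 3)
    (if k == e0 then a ord0 e1 * b ord0 e2 - a ord0 e2 * b ord0 e1
     else if k == e1 then a ord0 e2 * b ord0 e0 - a ord0 e0 * b ord0 e2
     else a ord0 e0 * b ord0 e1 - a ord0 e1 * b ord0 e0).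

Definition evalv (u : 'rV[{poly R}]_3) (s : R) : 'rV[R]_3 :=
  \row_(c < 3) (u ord0 c).[s].
Definition derivv (u : 'rV[{poly R}]_3) : 'rV[{poly R}]_3 :=
  \row_(c < 3) (u ord0 c)^`().

Definition degle (m : nat) (u : 'rV[{poly R}]_3) : Prop :=
  forall c : 'I_3, (size (u ord0 c) <= m.+1)%N.

Definition int0 (l : R) (f : R -> R) : R :=
  (\int[lebesgue_measure]_(s in `[0%R, l]%classic) f s)%R.

Definition intv (l : R) (u : 'rV[{poly R}]_3) : 'rV[R]_3 :=
  \row_(c < 3) int0 l (fun s => (u ord0 c).[s]).

Definition netint (nE : nat) (len : 'I_nE -> R) (u : 'I_nE -> 'rV[{poly R}]_3)
  : 'rV[R]_3 := \sum_(i < nE) intv (len i) (u i).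

(* Block form of the incidence matrices: a vector of R^{3 nE} (resp. R^{3 nV})
   is a family of blocks in R^3 indexed by edges (resp. vertices).
   (A^+_I P)_j = \sum_{i in J_j^+} P^i,  (A^-_I P)_j = \sum_{i in J_j^-} P^i. *)
Definition Aplus (nV nE : nat) (tgt : 'I_nE -> 'I_nV) (P : 'I_nE -> 'rV[R]_3)
  (j : 'I_nV) : 'rV[R]_3 := \sum_(i < nE | tgt i == j) P i.
Definition Aminus (nV nE : nat) (src : 'I_nE -> 'I_nV) (P : 'I_nE -> 'rV[R]_3)
  (j : 'I_nV) : 'rV[R]_3 := \sum_(i < nE | src i == j) P i.

Definition dotV (nV : nat) (X Y : 'I_nV -> 'rV[R]_3) : R :=
  \sum_(j < nV) dot3 (X j) (Y j).

Definition bform (nV nE : nat) (src tgt : 'I_nE -> 'I_nV)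
  (len : 'I_nE -> R) (t : 'I_nE -> 'rV[R]_3)
  (* Sigma = (q, p, P+, P-, Q+, Q-, alpha, beta) *)
  (q p : 'I_nE -> 'rV[{poly R}]_3) (Pp Pm Qp Qm : 'I_nE -> 'rV[R]_3)
  (alpha beta : 'rV[R]_3)
  (* psi = (v, w, V, W) *)
  (v w : 'I_nE -> 'rV[{poly R}]_3) (V W : 'I_nV -> 'rV[R]_3) : R :=
  \sum_(i < nE) int0 (len i) (fun s =>
      - dot3 (evalv (p i) s) (evalv (derivv (v i)) s + cross3 (t i) (evalv (w i) s))
      - dot3 (evalv (q i) s) (evalv (derivv (w i)) s))
  + \sum_(i < nE) (dot3 (Pp i) (evalv (v i) (len i)) - dot3 (Pm i) (evalv (v i) 0))
  + \sum_(i < nE) (dot3 (Qp i) (evalv (w i) (len i)) - dot3 (Qm i) (evalv (w i) 0))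
  - dotV (fun j => Aplus tgt Pp j - Aminus src Pm j) V
  - dotV (fun j => Aplus tgt Qp j - Aminus src Qm j) W
  + dot3 alpha (netint len v) + dot3 beta (netint len w).

End StentDefs.

Definition adjacent (nV nE : nat) (src tgt : 'I_nE -> 'I_nV) : rel 'I_nV :=
  fun a b => [exists i : 'I_nE,
                ((src i == a) && (tgt i == b)) || ((src i == b) && (tgt i == a))].
Definition graph_connected (nV nE : nat) (src tgt : 'I_nE -> 'I_nV) : Prop :=
  forall a b : 'I_nV, connect (adjacent src tgt) a b.

(* Sigma can be chosen so that b(Sigma, psi) becomes a sum of squares.  With
   P_+^i = v^i(l^i) - V_(tgt i), P_-^i = V_(src i) - v^i(0) and alpha = \int_N v
   (likewise Q_+, Q_-, beta for w and W), the adjoint identity for A_I^+ and A_I^-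
   turns the boundary and incidence terms into the squared mismatches between the
   edge values and the vertex values, and the alpha, beta terms into |\int_N v|^2
   and |\int_N w|^2.  Adding q = -w', admissible because deg w' <= n - 1 <= k,
   contributes \int |w'|^2.  Hence w is constant on each strut, agrees with W at
   the vertices and has zero network integral; connectedness makes it a single
   constant vector, which must vanish.  Once w = 0 the coupling t x w disappears
   and p = -v' gives v = 0 and V = 0 in the same way. *)

From HB Require Import structures.
From mathcomp Require Import all_boot all_order all_algebra.
From mathcomp Require Import all_classical all_reals all_analysis.
From mathcomp Require Import lra zify.
From mathcomp Require Import measurable_realfun lebesgue_integral_differentiation.
Set Implicit Arguments.
Unset Strict Implicit.
Unset Printing Implicit Defensive.

Import Order.TTheory GRing.Theory Num.Theory.
Import numFieldNormedType.Exports.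
Local Open Scope ring_scope.

Section Polynomials.
Variable R : numFieldType.
Implicit Type p : {poly R}.

Lemma deriv_eq0_polyC p : p^`() = 0 -> p = (p`_0)%:P.
Proof.
move=> dp0; apply/polyP => -[|i]; rewrite coefC //=.
have /eqP := congr1 (fun r : {poly R} => r`_i) dp0.
by rewrite coef_deriv coef0 mulrn_eq0 => /eqP.
Qed.

Lemma poly_eq0_itv p (l : R) : 0 < l ->
  (forall x, 0 < x < l -> p.[x] = 0) -> p = 0.
Proof.
move=> l_gt0 p0; pose rs := [seq l / i.+2%:R | i <- iota 0 (size p)].
apply: (@roots_geq_poly_eq0 _ p rs); last by rewrite size_map size_iota.
- apply/allP => _ /mapP[i _ ->]; apply/rootP/p0.
  by rewrite divr_gt0 //= ltr_pdivrMr // ltr_pMr // ltr1n.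
- rewrite map_inj_uniq ?iota_uniq // => i j /(mulfI (lt0r_neq0 l_gt0)).
  by move/invr_inj/eqP; rewrite eqr_nat !eqSS => /eqP.
Qed.

End Polynomials.

Section Vectors.
Variable R : realType.
Implicit Types (a b c : 'rV[R]_3) (u : 'rV[{poly R}]_3).

Lemma dot30l b : dot3 0 b = 0.
Proof. by rewrite /dot3 big1 // => i _; rewrite mxE mul0r. Qed.

Lemma dot3Nl a b : dot3 (- a) b = - dot3 a b.
Proof. by rewrite /dot3 -sumrN; apply: eq_bigr => i _; rewrite mxE mulNr. Qed.

Lemma dot3Bl a b c : dot3 (a - b) c = dot3 a c - dot3 b c.
Proof. by rewrite /dot3 -sumrB; apply: eq_bigr => i _; rewrite !mxE mulrBl. Qed.

Lemma dot3Br a b c : dot3 a (b - c) = dot3 a b - dot3 a c.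
Proof. by rewrite /dot3 -sumrB; apply: eq_bigr => i _; rewrite !mxE mulrBr. Qed.

Lemma dot3_suml (I : Type) (r : seq I) (P : pred I) (F : I -> 'rV[R]_3) b :
  dot3 (\sum_(i <- r | P i) F i) b = \sum_(i <- r | P i) dot3 (F i) b.
Proof.
by rewrite /dot3 exchange_big; apply: eq_bigr => c _; rewrite summxE mulr_suml.
Qed.

Lemma dot3_ge0 a : 0 <= dot3 a a.
Proof. by apply: sumr_ge0 => i _; rewrite -expr2 sqr_ge0. Qed.

Lemma dot3_eq0 a : dot3 a a = 0 -> a = 0.
Proof.
move=> /psumr_eq0P a0; apply/rowP => c; rewrite mxE.
have /eqP : a ord0 c * a ord0 c = 0 by apply: a0 => // i _; rewrite -expr2 sqr_ge0.
by rewrite mulf_eq0 orbb => /eqP.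
Qed.

Lemma cross3v0 a : cross3 a 0 = 0.
Proof. by apply/rowP => i; rewrite !mxE !mulr0 !subrr !if_same. Qed.

Lemma evalv0 s : evalv (0 : 'rV[{poly R}]_3) s = 0.
Proof. by apply/rowP => c; rewrite !mxE horner0. Qed.

Lemma evalvN u s : evalv (- u) s = - evalv u s.
Proof. by apply/rowP => c; rewrite !mxE hornerN. Qed.

Lemma evalv_polyC a s : evalv (map_mx polyC a) s = a.
Proof. by apply/rowP => c; rewrite !mxE hornerC. Qed.

Lemma derivv_eq0_const u : derivv u = 0 -> u = map_mx polyC (evalv u 0).
Proof.
move=> du0; apply/rowP => c; rewrite !mxE horner_coef0.
by apply: deriv_eq0_polyC; have /rowP/(_ c) := du0; rewrite !mxE.
Qed.

Lemma degle0 k : degle k (0 : 'rV[{poly R}]_3).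
Proof. by move=> c; rewrite mxE size_poly0. Qed.

Lemma degleN k u : degle k u -> degle k (- u).
Proof. by move=> uk c; rewrite mxE size_polyN. Qed.

Lemma degle_derivv n k u : (n.-1 <= k)%N -> degle n u -> degle k (derivv u).
Proof.
move=> nk un c; rewrite mxE; have [->|u0] := eqVneq (u ord0 c) 0.
  by rewrite deriv0 size_poly0.
have := lt_size_deriv u0; have := un c; lia.
Qed.

End Vectors.

Section Integrals.
Variable R : realType.
Implicit Types (l : R) (f g : R -> R).

Lemma eq_int0 l f g : (forall s, f s = g s) -> int0 l f = int0 l g.
Proof. by move=> fg; congr int0; apply: funext. Qed.

Lemma int0_ge0 l f : (forall s, 0 <= f s) -> 0 <= int0 l f.
Proof. by move=> f0; apply: Rintegral_ge0 => s _; exact: f0. Qed.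

Lemma int0_cst l (a : R) : 0 <= l -> int0 l (fun=> a) = a * l.
Proof.
move=> l0; rewrite /int0 Rintegral_cst //= lebesgue_measure_itv /= lte_fin.
by case: ltgtP l0 => // [_ _|<- _] /=; rewrite ?subr0.
Qed.

Lemma int0_ge_itv l f (a b c : R) : continuous f -> (forall s, 0 <= f s) ->
  0 <= c -> 0 <= a <= b -> b <= l -> (forall s, a <= s <= b -> c <= f s) ->
  c * (b - a) <= int0 l f.
Proof.
move=> cf f0 c0 /andP[a0 ab] bl cf_ab.
have mf : @measurable_fun _ _ (measurableTypeR R) _ setT (EFin \o f).
  by apply/measurable_EFinP; exact: continuous_measurable_fun.
have intf : lebesgue_measure.-integrable `[0, l] (EFin \o f).
  by apply: continuous_compact_integrable; [exact: segment_compact|exact: continuous_subspaceT].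
rewrite -lee_fin /int0 /Rintegral fineK ?(integrable_fin_num _ intf) //.
have -> : (c * (b - a))%:E =
    (\int[lebesgue_measure]_(s in `[a, b]) c%:E)%E.
  rewrite integral_cst //= lebesgue_measure_itv /= lte_fin.
  have [<-|ab'] := eqVneq a b; first by rewrite ltxx subrr mulr0 mule0.
  by rewrite lt_neqAle ab' ab -EFinD -EFinM.
apply: (@le_trans _ _ (\int[lebesgue_measure]_(s in `[a, b]) (f s)%:E)%E).
  by apply: ge0_le_integral => //; exact: measurable_funTS mf.
apply: ge0_subset_integral => //; first exact: measurable_funTS mf.
  by move=> s _; rewrite lee_fin.
by move=> s /=; rewrite !in_itv /= => /andP[as_ sb]; apply/andP; split; lra.
Qed.

Lemma int0_eq0_continuous l f : continuous f -> (forall s, 0 <= f s) ->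
  int0 l f = 0 -> forall x, 0 < x < l -> f x = 0.
Proof.
move=> cf f0 If0 x /andP[x0 xl]; apply/eqP; rewrite eq_le f0 andbT leNgt.
apply/negP => fx0.
have [e /= e0 fe] : nbhs_ball x (fun y => f x / 2 < f y).
  apply/nbhs_ballP; apply: (cvgr_gt (f x) (cf x)).
  by rewrite ltr_pdivrMr // ltr_pMr // ltr1n.
pose d := Num.min (e / 2) (Num.min x (l - x)).
have d_gt0 : 0 < d by rewrite !lt_min divr_gt0 // x0 subr_gt0 xl.
have [de dx dlx] : [/\ d <= e / 2, d <= x & d <= l - x].
  by rewrite !ge_min !lexx !orbT.
have : f x / 2 * (x + d - (x - d)) <= int0 l f.
  apply: int0_ge_itv => //; first by rewrite divr_ge0 // ltW.
  - by apply/andP; split; lra.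
  - by lra.
  move=> s /andP[sl su]; apply/ltW/fe; rewrite /= -ball_normE /ball_ /=.
  rewrite ltr_norml; apply/andP; split; lra.
by rewrite If0 leNgt mulr_gt0 ?divr_gt0 //; lra.
Qed.

Lemma int0_dot3_evalv_eq0 l (u : 'rV[{poly R}]_3) : 0 < l ->
  int0 l (fun s => dot3 (evalv u s) (evalv u s)) = 0 -> u = 0.
Proof.
move=> l_gt0 I0; apply/rowP => c; rewrite mxE; apply: (poly_eq0_itv l_gt0) => x x_in.
have cont : continuous (fun s => dot3 (evalv u s) (evalv u s)).
  suff -> : (fun s => dot3 (evalv u s) (evalv u s)) =
            horner (\sum_(c < 3) u ord0 c * u ord0 c) by exact: continuous_horner.
  apply: funext => s; rewrite horner_sum; apply: eq_bigr => i _.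
  by rewrite !mxE hornerM.
have /dot3_eq0/rowP/(_ c) := int0_eq0_continuous cont (fun s => dot3_ge0 _) I0 x_in.
by rewrite !mxE.
Qed.

End Integrals.

Lemma connect_edge_invariant (nV nE : nat) (src tgt : 'I_nE -> 'I_nV)
    (T : Type) (f : 'I_nV -> T) :
  graph_connected src tgt -> (forall i, f (src i) = f (tgt i)) ->
  forall a b, f a = f b.
Proof.
move=> conn f_edge a b; have /connectP[p pth ->] := conn a b.
elim: p a pth => //= x p IH a /andP[/existsP[i a_x] /IH <-].
by case/orP: a_x => /andP[/eqP <- /eqP <-].
Qed.

Section Network.
Variables (R : realType) (nV nE : nat) (src tgt : 'I_nE -> 'I_nV).
Variable len : 'I_nE -> R.

Lemma sum_dot3_preimage (g : 'I_nE -> 'I_nV) (F : 'I_nE -> 'rV[R]_3)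
    (U : 'I_nV -> 'rV[R]_3) :
  \sum_j dot3 (\sum_(i | g i == j) F i) (U j) = \sum_i dot3 (F i) (U (g i)).
Proof.
under eq_bigr => j _ do rewrite dot3_suml.
rewrite (exchange_big_dep xpredT) //=; apply: eq_bigr => i _.
by rewrite (big_pred1 (g i)) // => j; rewrite eq_sym.
Qed.

Lemma dotV_incidence (P Q : 'I_nE -> 'rV[R]_3) (U : 'I_nV -> 'rV[R]_3) :
  dotV (fun j => Aplus tgt P j - Aminus src Q j) U =
  \sum_i dot3 (P i) (U (tgt i)) - \sum_i dot3 (Q i) (U (src i)).
Proof.
rewrite /dotV /Aplus /Aminus -!sum_dot3_preimage -sumrB.
by apply: eq_bigr => j _; exact: dot3Bl.
Qed.

Lemma boundary_incidenceE (a b : 'I_nE -> 'rV[R]_3) (U : 'I_nV -> 'rV[R]_3)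
    (P Q : 'I_nE -> 'rV[R]_3) :
  \sum_i (dot3 (P i) (b i) - dot3 (Q i) (a i))
    - dotV (fun j => Aplus tgt P j - Aminus src Q j) U =
  \sum_i (dot3 (P i) (b i - U (tgt i)) + dot3 (Q i) (U (src i) - a i)).
Proof.
rewrite dotV_incidence -!sumrB; apply: eq_bigr => i _; rewrite !dot3Br; lra.
Qed.

Definition constraint_defect (u : 'I_nE -> 'rV[{poly R}]_3) (U : 'I_nV -> 'rV[R]_3) :=
  \sum_i (dot3 (evalv (u i) (len i) - U (tgt i)) (evalv (u i) (len i) - U (tgt i))
        + dot3 (U (src i) - evalv (u i) 0) (U (src i) - evalv (u i) 0))
  + dot3 (netint len u) (netint len u).

Lemma constraint_defect_ge0 u U : 0 <= constraint_defect u U.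
Proof.
by rewrite addr_ge0 ?dot3_ge0 ?sumr_ge0 // => i _; rewrite addr_ge0 ?dot3_ge0.
Qed.

Lemma constraint_defect_eq0 u U : constraint_defect u U = 0 ->
  [/\ forall i, evalv (u i) (len i) = U (tgt i),
      forall i, evalv (u i) 0 = U (src i) & netint len u = 0].
Proof.
move=> /eqP; rewrite paddr_eq0 ?dot3_ge0 //; last first.
  by apply: sumr_ge0 => i _; rewrite addr_ge0 ?dot3_ge0.
case/andP=> /eqP sum0 /eqP/dot3_eq0 nu.
have bd i : evalv (u i) (len i) - U (tgt i) = 0 /\ U (src i) - evalv (u i) 0 = 0.
  have /eqP := psumr_eq0P (fun j _ => addr_ge0 (dot3_ge0 _) (dot3_ge0 _)) sum0 (i := i) isT.
  by rewrite paddr_eq0 ?dot3_ge0 // => /andP[/eqP/dot3_eq0 -> /eqP/dot3_eq0 ->].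
by split=> // i; case: (bd i) => /subr0_eq uT /subr0_eq/esym uS.
Qed.

Lemma intv_polyC (l : R) (a : 'rV[R]_3) : 0 <= l -> intv l (map_mx polyC a) = l *: a.
Proof.
move=> l0; apply/rowP => c; rewrite /intv !mxE (@eq_int0 _ _ _ (fun=> a ord0 c)).
  by rewrite int0_cst // mulrC.
by move=> s; rewrite hornerC.
Qed.

Lemma bform_probe (t : 'I_nE -> 'rV[R]_3) (v w p q : 'I_nE -> 'rV[{poly R}]_3)
    (V W : 'I_nV -> 'rV[R]_3) :
  bform src tgt len t (fun i => - q i) (fun i => - p i)
    (fun i => evalv (v i) (len i) - V (tgt i)) (fun i => V (src i) - evalv (v i) 0)
    (fun i => evalv (w i) (len i) - W (tgt i)) (fun i => W (src i) - evalv (w i) 0)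
    (netint len v) (netint len w) v w V W =
  \sum_i int0 (len i) (fun s =>
      dot3 (evalv (p i) s) (evalv (derivv (v i)) s + cross3 (t i) (evalv (w i) s))
    + dot3 (evalv (q i) s) (evalv (derivv (w i)) s))
  + constraint_defect v V + constraint_defect w W.
Proof.
rewrite /bform /constraint_defect.
under eq_bigr => i _ do under eq_int0 => s do rewrite !evalvN !dot3Nl !opprK.
have /= := boundary_incidenceE (fun i => evalv (v i) 0) (fun i => evalv (v i) (len i)) V
  (fun i => evalv (v i) (len i) - V (tgt i)) (fun i => V (src i) - evalv (v i) 0).
have /= := boundary_incidenceE (fun i => evalv (w i) 0) (fun i => evalv (w i) (len i)) W
  (fun i => evalv (w i) (len i) - W (tgt i)) (fun i => W (src i) - evalv (w i) 0).
lra.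
Qed.

Hypotheses (nE_gt0 : (0 < nE)%N) (conn : graph_connected src tgt).
Hypothesis len_gt0 : forall i, 0 < len i.

Lemma derivv_constraint_defect_eq0 u U : (forall i, derivv (u i) = 0) ->
  constraint_defect u U = 0 -> (forall i, u i = 0) /\ (forall j, U j = 0).
Proof.
move=> du /constraint_defect_eq0[u_tgt u_src nu].
have uC i : u i = map_mx polyC (U (src i)) by rewrite -u_src; exact: derivv_eq0_const.
have U_edge i : U (src i) = U (tgt i) by rewrite -u_tgt uC evalv_polyC.
pose i0 := Ordinal nE_gt0; have Uc j : U j = U (src i0).
  exact: connect_edge_invariant conn U_edge j (src i0).
have U0 j : U j = 0.
  have /eqP : (\sum_i len i) *: U (src i0) = 0.
    rewrite -nu /netint scaler_suml; apply: eq_bigr => i _.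
    by rewrite uC Uc intv_polyC // ltW.
  rewrite scaler_eq0 Uc => /orP[/eqP sum_len0|/eqP //].
  have : 0 < \sum_i len i.
    rewrite (bigD1 i0) //=; have := len_gt0 i0.
    have : 0 <= \sum_(i | i != i0) len i by apply: sumr_ge0 => i _; exact: ltW.
    lra.
  by rewrite sum_len0 ltxx.
split=> // i; apply/rowP => c; by rewrite uC U0 !mxE.
Qed.

Lemma energy_constraint_defect_eq0 u U (e : R) : 0 <= e ->
  \sum_i int0 (len i) (fun s => dot3 (evalv (derivv (u i)) s) (evalv (derivv (u i)) s))
    + e + constraint_defect u U = 0 ->
  (forall i, u i = 0) /\ (forall j, U j = 0).
Proof.
set E := \sum_i _ => e0 H.
have Ei_ge0 i : 0 <= int0 (len i) (fun s =>
    dot3 (evalv (derivv (u i)) s) (evalv (derivv (u i)) s)).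
  by apply: int0_ge0 => s; exact: dot3_ge0.
have E_ge0 : 0 <= E by exact: sumr_ge0.
have d_ge0 := constraint_defect_ge0 u U.
have E0 : E = 0 by lra.
apply: derivv_constraint_defect_eq0; last by lra.
move=> i; apply: int0_dot3_evalv_eq0 (len_gt0 i) _.
exact: (psumr_eq0P (fun i _ => Ei_ge0 i) E0).
Qed.

End Network.

Theorem lemma4p2 (R : realType) (nV nE : nat)
  (src tgt : 'I_nE -> 'I_nV)          (* edge i leaves src i, enters tgt i *)
  (len : 'I_nE -> R) (t : 'I_nE -> 'rV[R]_3)
  (X : 'I_nV -> 'rV[R]_3)             (* vertex positions *)
  (n k : nat) :
  (0 < nE)%N ->
  graph_connected src tgt ->
  (forall i, 0 < len i) ->
  (forall i, dot3 (t i) (t i) = 1) ->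
  (* straight strut: Phi^i(s) = Phi^i(0) + s t^i, from vertex src i to tgt i *)
  (forall i, X (tgt i) = X (src i) + len i *: t i) ->
  (1 <= n)%N -> (n.-1 <= k)%N ->
  forall (v w : 'I_nE -> 'rV[{poly R}]_3) (V W : 'I_nV -> 'rV[R]_3),
  (forall i, degle n (v i)) -> (forall i, degle n (w i)) ->
  (forall (q p : 'I_nE -> 'rV[{poly R}]_3) (Pp Pm Qp Qm : 'I_nE -> 'rV[R]_3)
          (alpha beta : 'rV[R]_3),
     (forall i, degle k (q i)) -> (forall i, degle k (p i)) ->
     bform src tgt len t q p Pp Pm Qp Qm alpha beta v w V W = 0) ->
  (forall i, v i = 0) /\ (forall i, w i = 0) /\
  (forall j, V j = 0) /\ (forall j, W j = 0).
Proof.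
move=> nE_gt0 conn len_gt0 _ _ _ nk v w V W v_deg w_deg b0.
have probe p q : (forall i, degle k (p i)) -> (forall i, degle k (q i)) ->
    \sum_i int0 (len i) (fun s =>
        dot3 (evalv (p i) s) (evalv (derivv (v i)) s + cross3 (t i) (evalv (w i) s))
      + dot3 (evalv (q i) s) (evalv (derivv (w i)) s))
    + constraint_defect src tgt len v V + constraint_defect src tgt len w W = 0.
  by move=> p_deg q_deg; rewrite -bform_probe; apply: b0 => i; apply: degleN.
have [w0 W0] : (forall i, w i = 0) /\ (forall j, W j = 0).
  apply: (energy_constraint_defect_eq0 nE_gt0 conn len_gt0 (constraint_defect_ge0 src tgt len v V)).
  have := probe (fun=> 0) (fun i => derivv (w i)) (fun=> degle0 _ k)
    (fun i => degle_derivv nk (w_deg i)).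
  by under eq_bigr => i _ do under eq_int0 => s do rewrite evalv0 dot30l add0r.
have [v0 V0] : (forall i, v i = 0) /\ (forall j, V j = 0).
  apply: (energy_constraint_defect_eq0 nE_gt0 conn len_gt0 (constraint_defect_ge0 src tgt len w W)).
  have := probe (fun i => derivv (v i)) (fun=> 0)
    (fun i => degle_derivv nk (v_deg i)) (fun=> degle0 _ k).
  under eq_bigr => i _ do under eq_int0 => s do
    rewrite w0 evalv0 cross3v0 addr0 dot30l addr0.
  by rewrite addrAC.
by [].
Qed.
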